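(* Let $H$ be an $\mathcal H$-class of $\mathcal{OR}_n$ containing an idempotent of rank $k$. If $k=n$ then $H=W'$, and if $k\in\{1,\dots,m\}$ then $H$ is isomorphic (as a group) to the symmetric group $S_k$.
   Context: Let $m\ge 1$, $n=2m$, $\mathbf n=\{1,\dots,n\}$, $\theta(i)=n+1-i$, written $\bar i$. A proper subset $I\subset\mathbf n$ is admissible if $I\cap\theta(I)=\emptyset$; $\mathbf n$ and $\emptyset$ are also admissible. For an injective partial map $\sigma$ of $\mathbf n$, $I(\sigma)$ is its domain, $J(\sigma)$ its image, $\mathrm{rk}(\sigma)=|I(\sigma)|$; products are compositions of partial maps. $W=\{\sigma\in S_n:\sigma(\bar i)=\overline{\sigma(i)}\ \forall i\}$, $W'=\{\sigma\in W:|\sigma(\{1,\dots,m\})\cap\{m+1,\dots,n\}|\text{ even}\}$. An admissible $m$-subset is of type I if it contains an even number of elements $>m$, type II otherwise. $\mathcal{OR}_n$ consists of the injective partial maps $\sigma$ with: $\mathrm{rk}(\sigma)<m$ and $I(\sigma),J(\sigma)$ admissible; or $\mathrm{rk}(\sigma)=m$ and $I(\sigma),J(\sigma)$ admissible of the same type; or $\sigma\in W'$. $\mathcal H$ is Green's $\mathcal H$-relation on the monoid $\mathcal{OR}_n$. *)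

From mathcomp Require Import all_boot all_fingroup.
Set Implicit Arguments. Unset Strict Implicit. Unset Printing Implicit Defensive.

(* Points 1..n of the paper are encoded as 'I_n = {0,..,n-1} (i <-> i+1),
   with n = 2 * m.  theta(i) = n+1-i becomes rev_ord i = n-1-i.
   An element > m (1-indexed) is an ordinal i with m <= i (0-indexed). *)

Notation pmapn m := {ffun 'I_(2 * m) -> option 'I_(2 * m)}.

Section Defs.
Variable m : nat.
Local Notation n := (2 * m).
Local Notation pm := (pmapn m).

Definition theta (i : 'I_n) : 'I_n := rev_ord i.

Definition dom (s : pm) : {set 'I_n} := [set i | s i != None].
Definition img (s : pm) : {set 'I_n} := [set j | [exists i, s i == Some j]].
Definition rk (s : pm) : nat := #|dom s|.

Definition pinj (s : pm) : bool :=
  [forall i, forall j, ((s i != None) && (s i == s j)) ==> (i == j)].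

(* product = composition of partial maps: first s, then t *)
Definition pmul (s t : pm) : pm := [ffun i => obind t (s i)].

Definition admissible (I : {set 'I_n}) : bool :=
  (I == [set: 'I_n]) || [disjoint I & theta @: I].

Definition inW (s : pm) : bool :=
  pinj s && [forall i, s i != None] &&
  [forall i, s (theta i) == omap theta (s i)].

Definition inW' (s : pm) : bool :=
  inW s &&
  ~~ odd #|[set i : 'I_n | (i < m) && [exists j : 'I_n, (m <= j) && (s i == Some j)]]|.

Definition typeI (I : {set 'I_n}) : bool := ~~ odd #|[set i in I | m <= i]|.

Definition OR : {set pm} :=
  [set s | pinj s &&
     [|| (rk s < m) && admissible (dom s) && admissible (img s),
         [&& rk s == m, admissible (dom s), admissible (img s)
           & typeI (dom s) == typeI (img s)]
       | inW' s]].

(* Green's relations in the monoid OR (it contains the identity) *)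
Definition Rrel (a b : pm) : Prop :=
  (exists2 x, x \in OR & b = pmul a x) /\ (exists2 y, y \in OR & a = pmul b y).
Definition Lrel (a b : pm) : Prop :=
  (exists2 x, x \in OR & b = pmul x a) /\ (exists2 y, y \in OR & a = pmul y b).
Definition Hrel (a b : pm) : Prop := Rrel a b /\ Lrel a b.

End Defs.

From Pilot Require Import Defs.
From mathcomp Require Import all_boot all_fingroup.
From mathcomp Require Import zify.
Set Implicit Arguments. Unset Strict Implicit. Unset Printing Implicit Defensive.

(* An idempotent injective partial map is the identity on its domain I, and
   H-related maps have the same domain and the same image.  Hence the H-class of
   the idempotent consists of the injective maps of I onto itself lying in OR_n.
   If |I| <= m every such map lies in OR_n (its domain and image are the same
   admissible set), so the class is a copy of Sym(I).  If |I| = n the idempotent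
   is the identity, its H-class is the group of units of OR_n, and the units are
   the total maps of OR_n, i.e. W'; W' is closed under inverses because p and
   p^-1 move the same number of points of {1,..,m} out of {1,..,m}. *)

Lemma card_escape_permV (T : finType) (s : {perm T}) (L : {set T}) :
  #|[set i in L | s i \notin L]| = #|[set i in L | (s^-1)%g i \notin L]|.
Proof.
set A := s @^-1: L.
have -> : [set i in L | s i \notin L] = L :\: A by apply/setP => i; rewrite !inE andbC.
have -> : [set i in L | (s^-1)%g i \notin L] = (s^-1)%g @^-1: (A :\: L).
  by apply/setP => i; rewrite !inE permKV andbC.
rewrite card_preimset; last exact: perm_inj.
have := cardsID A L; have := cardsID L A.
have : #|A| = #|L| by rewrite card_preimset //; exact: perm_inj.
by rewrite setIC; lia.
Qed.

Section PartialMaps.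
Variable m : nat.
Local Notation n := (2 * m).
Local Notation pm := (pmapn m).

Definition pid (I : {set 'I_n}) : pm := [ffun i => if i \in I then Some i else None].

Lemma pinjP (s : pm) : pinj s -> forall i j, s i != None -> s i = s j -> i = j.
Proof.
move=> /forallP sinj i j si_def sij.
by apply/eqP/(implyP (forallP (sinj i) j)); rewrite si_def sij eqxx.
Qed.

Lemma OR_pinj (s : pm) : s \in OR m -> pinj s.
Proof. by rewrite inE => /andP[]. Qed.

Lemma dom_pid I : Defs.dom (pid I) = I.
Proof. by apply/setP => i; rewrite !inE ffunE; case: (i \in I). Qed.

Lemma img_pid I : img (pid I) = I.
Proof.
apply/setP => j; rewrite inE; apply/existsP/idP => [[i] | jI].
  by rewrite ffunE; case: ifP => // iI /eqP[<-].
by exists j; rewrite ffunE jI.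
Qed.

Lemma pmul_pidTl (s : pm) : pmul (pid setT) s = s.
Proof. by apply/ffunP => i; rewrite !ffunE inE. Qed.

Lemma pmul_pidTr (s : pm) : pmul s (pid setT) = s.
Proof. by apply/ffunP => i; rewrite !ffunE; case: (s i) => //= j; rewrite ffunE inE. Qed.

Lemma idempotent_pinj_pid (e : pm) : pinj e -> pmul e e = e -> e = pid (Defs.dom e).
Proof.
move=> einj eid; apply/ffunP => i; rewrite ffunE inE.
case ei: (e i) => [j|] //=; congr Some.
have ej : e j = Some j by rewrite -ei -[in RHS]eid ffunE ei.
by apply: (pinjP einj); rewrite ej ?ei.
Qed.

Lemma dom_pmul_sub (a x : pm) : Defs.dom (pmul a x) \subset Defs.dom a.
Proof. by apply/subsetP => i; rewrite !inE ffunE; case: (a i). Qed.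

Lemma img_pmul_sub (x a : pm) : img (pmul x a) \subset img a.
Proof.
apply/subsetP => j; rewrite !inE => /existsP[i]; rewrite ffunE.
by case: (x i) => //= k akj; apply/existsP; exists k.
Qed.

Lemma Rrel_dom (a b : pm) : Rrel a b -> Defs.dom a = Defs.dom b.
Proof.
by case=> -[x _ ->] [y _ ab]; apply/eqP; rewrite eqEsubset dom_pmul_sub {1}ab dom_pmul_sub.
Qed.

Lemma Lrel_img (a b : pm) : Lrel a b -> img a = img b.
Proof.
by case=> -[x _ ->] [y _ ab]; apply/eqP; rewrite eqEsubset img_pmul_sub {1}ab img_pmul_sub.
Qed.

Lemma Hrel_of_inverse (e a b : pm) : a \in OR m -> b \in OR m ->
  pmul e a = a -> pmul a e = a -> pmul a b = e -> pmul b a = e -> Hrel e a.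
Proof.
by move=> aOR bOR ea ae ab ba; split; split; [exists a | exists b | exists a | exists b].
Qed.

Lemma dom_inW (s : pm) : inW s -> Defs.dom s = setT.
Proof. by case/andP=> /andP[_ /forallP s_total] _; apply/setP => i; rewrite !inE s_total. Qed.

Lemma OR_admissible_dom (s : pm) :
  0 < m -> s \in OR m -> rk s <= m -> admissible (Defs.dom s).
Proof.
move=> m_gt0 /[!inE] /andP[_ /or3P[/andP[/andP[_ adm] _] _ | /and4P[_ adm _ _] _ |]] //.
move=> /andP[/dom_inW s_total _]; rewrite /rk s_total cardsT card_ord => rk_s.
by exfalso; lia.
Qed.

Lemma OR_of_img_dom (s : pm) : pinj s -> img s = Defs.dom s ->
  admissible (Defs.dom s) -> rk s <= m -> s \in OR m.
Proof.
move=> sinj img_s adm; rewrite inE sinj img_s adm eqxx /= leq_eqVlt => /orP[->|->] //.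
by rewrite orbT.
Qed.

Definition pmap_of_perm (p : {perm 'I_n}) : pm := [ffun i => Some (p i)].

Lemma pmap_of_permM p q : pmul (pmap_of_perm p) (pmap_of_perm q) = pmap_of_perm (p * q).
Proof. by apply/ffunP => i; rewrite !ffunE /= ffunE permM. Qed.

Lemma pmap_of_perm1 : pmap_of_perm 1 = pid setT.
Proof. by apply/ffunP => i; rewrite !ffunE inE perm1. Qed.

Lemma inW_pmap_of_perm (s : pm) : inW s -> exists p, s = pmap_of_perm p.
Proof.
move=> /andP[/andP[sinj /forallP s_total] _].
pose f i := odflt i (s i).
have sE i : s i = Some (f i) by rewrite /f; case: (s i) (s_total i).
have f_inj : injective f.
  by move=> i j fij; apply: (pinjP sinj); rewrite ?s_total // !sE fij.
by exists (perm f_inj); apply/ffunP => i; rewrite ffunE permE sE.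
Qed.

Lemma inW'_pmap_of_perm p : inW' (pmap_of_perm p) =
  [forall i, p (theta i) == theta (p i)] &&
  ~~ odd #|[set i in [set i : 'I_n | i < m] | p i \notin [set i : 'I_n | i < m]]|.
Proof.
have pinj_p : pinj (pmap_of_perm p).
  apply/forallP => i; apply/forallP => j; apply/implyP => /andP[_].
  by rewrite !ffunE => /eqP[/perm_inj ->].
have total_p : [forall i, pmap_of_perm p i != None] by apply/forallP => i; rewrite ffunE.
rewrite /inW' /inW pinj_p total_p /=; congr andb.
  by apply: eq_forallb => i; rewrite !ffunE /= (inj_eq (@Some_inj _)).
congr (~~ odd _); apply: eq_card => i; rewrite !inE ffunE -leqNgt; congr (_ && _).
apply/existsP/idP => [[j /andP[mj /eqP[->]]] // | m_pi].
by exists (p i); rewrite m_pi eqxx.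
Qed.

Lemma inW'_pmap_of_permV p : inW' (pmap_of_perm p) -> inW' (pmap_of_perm p^-1).
Proof.
rewrite !inW'_pmap_of_perm -card_escape_permV => /andP[/forallP p_theta ->].
rewrite andbT; apply/forallP => i; apply/eqP/(@perm_inj _ p).
by rewrite permKV (eqP (p_theta _)) permKV.
Qed.

Lemma inW'_OR (s : pm) : inW' s -> s \in OR m.
Proof. by move=> sW'; rewrite inE sW' !orbT andbT; case/andP: sW' => /andP[/andP[->]]. Qed.

Lemma OR_total_inW' (s : pm) : 0 < m -> s \in OR m -> Defs.dom s = setT -> inW' s.
Proof.
move=> m_gt0 + s_total; rewrite inE /rk s_total cardsT card_ord.
have [-> ->] : (n < m) = false /\ (n == m) = false by split; lia.
by case/andP.
Qed.

Lemma Hclass_idempotent_full (e b : pm) : 0 < m -> e \in OR m -> pmul e e = e ->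
  rk e = n -> (b \in OR m /\ Hrel e b) <-> inW' b.
Proof.
move=> m_gt0 eOR eid rk_e.
have -> : e = pid setT.
  rewrite [LHS](idempotent_pinj_pid (OR_pinj eOR) eid); congr pid.
  by apply/eqP; rewrite eqEcard subsetT cardsT card_ord -/(rk e) rk_e leqnn.
split=> [[bOR [/Rrel_dom]]|bW'].
  by rewrite dom_pid => /esym /(OR_total_inW' m_gt0 bOR).
have [p bE] : exists p, b = pmap_of_perm p by apply: inW_pmap_of_perm; case/andP: bW'.
rewrite bE in bW' *; split; first exact: inW'_OR.
apply: (Hrel_of_inverse (b := pmap_of_perm p^-1)).
- exact: inW'_OR.
- exact/inW'_OR/inW'_pmap_of_permV.
- exact: pmul_pidTl.
- exact: pmul_pidTr.
- by rewrite pmap_of_permM mulgV pmap_of_perm1.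
- by rewrite pmap_of_permM mulVg pmap_of_perm1.
Qed.

End PartialMaps.

Section PermOn.
Variables (m : nat) (I : {set 'I_(2 * m)}) (x0 : 'I_(2 * m)) (x0I : x0 \in I).
Local Notation pm := (pmapn m).

Definition pmap_of_perm_on (p : {perm 'I_#|I|}) : pm :=
  [ffun i => if i \in I then Some (enum_val (p (enum_rank_in x0I i))) else None].

Lemma pmap_of_perm_on_val p z : pmap_of_perm_on p (enum_val z) = Some (enum_val (p z)).
Proof. by rewrite ffunE enum_valP enum_valK_in. Qed.

Lemma pmap_of_perm_on_out p i : i \notin I -> pmap_of_perm_on p i = None.
Proof. by rewrite ffunE => /negbTE ->. Qed.

Lemma pmap_of_perm_on1 : pmap_of_perm_on 1 = pid I.
Proof.
apply/ffunP => i; rewrite [RHS]ffunE; case: ifPn => [iI | /pmap_of_perm_on_out //].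
by rewrite -(enum_rankK_in x0I iI) pmap_of_perm_on_val perm1.
Qed.

Lemma pmap_of_perm_onM p q :
  pmul (pmap_of_perm_on p) (pmap_of_perm_on q) = pmap_of_perm_on (p * q).
Proof.
apply/ffunP => i; rewrite ffunE; case: (boolP (i \in I)) => [iI | iNI].
  by rewrite -(enum_rankK_in x0I iI) !pmap_of_perm_on_val /= pmap_of_perm_on_val permM.
by rewrite !pmap_of_perm_on_out.
Qed.

Lemma pmap_of_perm_on_inj : injective pmap_of_perm_on.
Proof.
move=> p q pq; apply/permP => z.
by have := pmap_of_perm_on_val p z; rewrite pq pmap_of_perm_on_val => -[/enum_val_inj].
Qed.

Lemma dom_pmap_of_perm_on p : Defs.dom (pmap_of_perm_on p) = I.
Proof. by apply/setP => i; rewrite inE ffunE; case: (i \in I). Qed.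

Lemma img_pmap_of_perm_on p : img (pmap_of_perm_on p) = I.
Proof.
apply/setP => j; rewrite inE; apply/existsP/idP => [[i]|jI].
  by rewrite ffunE; case: ifP => // _ /eqP[<-]; apply: enum_valP.
exists (enum_val ((p^-1)%g (enum_rank_in x0I j))).
by rewrite pmap_of_perm_on_val permKV enum_rankK_in.
Qed.

Lemma pinj_pmap_of_perm_on p : pinj (pmap_of_perm_on p).
Proof.
apply/forallP => i; apply/forallP => j; apply/implyP => /andP[pi_def /eqP pij].
have iI : i \in I by rewrite -(dom_pmap_of_perm_on p) inE.
have jI : j \in I by rewrite -(dom_pmap_of_perm_on p) inE -pij.
move: pij; rewrite -(enum_rankK_in x0I iI) -(enum_rankK_in x0I jI) !pmap_of_perm_on_val.
by move=> [/enum_val_inj/perm_inj ->].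
Qed.

Lemma pinj_dom_img_pmap_of_perm_on (b : pm) : pinj b -> Defs.dom b = I -> img b \subset I ->
  exists p, b = pmap_of_perm_on p.
Proof.
move=> binj bdom bimg.
have b_def i : (b i != None) = (i \in I) by rewrite -bdom inE.
pose f z := if b (enum_val z) is Some j then enum_rank_in x0I j else z.
have bE z : b (enum_val z) = Some (enum_val (f z)).
  have := b_def (enum_val z); rewrite /f enum_valP; case bz: (b (enum_val z)) => [j|] // _.
  rewrite enum_rankK_in // (subsetP bimg) // inE.
  by apply/existsP; exists (enum_val z); rewrite bz.
have f_inj : injective f.
  by move=> y z fyz; apply/enum_val_inj/(pinjP binj); rewrite ?b_def ?enum_valP // !bE fyz.
exists (perm f_inj); apply/ffunP => i; case: (boolP (i \in I)) => [iI | iNI].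
  by rewrite -(enum_rankK_in x0I iI) pmap_of_perm_on_val permE bE.
by rewrite pmap_of_perm_on_out //; apply/eqP; rewrite -b_def negbK in iNI.
Qed.

(* Junk value 1 outside the range of [pmap_of_perm_on]. *)
Definition perm_of_pmap_on (b : pm) : {perm 'I_#|I|} :=
  odflt 1%g [pick p | b == pmap_of_perm_on p].

Lemma pmap_of_perm_onK : cancel pmap_of_perm_on perm_of_pmap_on.
Proof.
move=> p; rewrite /perm_of_pmap_on; case: pickP => [q /eqP/pmap_of_perm_on_inj -> // |].
by move/(_ p); rewrite eqxx.
Qed.

End PermOn.

Lemma Hclass_idempotent_small m (e b : pmapn m) x0 (x0I : x0 \in Defs.dom e) :
  0 < m -> e \in OR m -> pmul e e = e -> rk e <= m ->
  (b \in OR m /\ Hrel e b) <-> exists p, b = pmap_of_perm_on x0I p.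
Proof.
move=> m_gt0 eOR eid rk_e.
have eE := idempotent_pinj_pid (OR_pinj eOR) eid.
have pOR p : pmap_of_perm_on x0I p \in OR m.
  apply: OR_of_img_dom;
    rewrite ?pinj_pmap_of_perm_on ?img_pmap_of_perm_on /rk ?dom_pmap_of_perm_on //.
  exact: OR_admissible_dom.
split=> [[bOR [eRb eLb]] | [p ->]].
  apply: pinj_dom_img_pmap_of_perm_on (OR_pinj bOR) _ _; first exact/esym/Rrel_dom.
  by rewrite -(Lrel_img eLb) {1}eE img_pid.
split=> //; rewrite [e in Hrel e _]eE -(pmap_of_perm_on1 x0I).
apply: (Hrel_of_inverse (b := pmap_of_perm_on x0I p^-1));
  by rewrite ?pmap_of_perm_onM ?mul1g ?mulg1 ?mulgV ?mulVg.
Qed.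

Theorem proposition3p5 (m : nat) (hm : 1 <= m) (e : pmapn m)
  (eOR : e \in OR m) (eid : pmul e e = e) (H : {set pmapn m})
  (HH : forall b, b \in H <-> (b \in OR m /\ Hrel e b)) :
  (rk e = 2 * m -> forall s, s \in H <-> inW' s) /\
  (1 <= rk e <= m ->
     (forall a b, a \in H -> b \in H -> pmul a b \in H) /\
     exists f : pmapn m -> {perm 'I_(rk e)},
       [/\ (forall a b, a \in H -> b \in H -> f a = f b -> a = b),
           (forall p : {perm 'I_(rk e)}, exists2 a, a \in H & f a = p)
         & (forall a b, a \in H -> b \in H -> f (pmul a b) = (f a * f b)%g)]).
Proof.
split=> [rk_e s | /andP[rk_gt0 rk_le]]; first by rewrite HH; exact: Hclass_idempotent_full.
have [x0 x0I] : exists x0, x0 \in Defs.dom e by apply/set0Pn; rewrite -card_gt0.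
have Hmk b : b \in H <-> exists p, b = pmap_of_perm_on x0I p.
  by rewrite HH; exact: Hclass_idempotent_small.
split=> [a b /Hmk[p ->] /Hmk[q ->] | ].
  by apply/Hmk; exists (p * q)%g; rewrite pmap_of_perm_onM.
exists (perm_of_pmap_on x0I).
split=> [a b /Hmk[p ->] /Hmk[q ->] | p | a b /Hmk[p ->] /Hmk[q ->]].
- by rewrite !pmap_of_perm_onK => ->.
- by exists (pmap_of_perm_on x0I p); [apply/Hmk; exists p | rewrite pmap_of_perm_onK].
- by rewrite pmap_of_perm_onM !pmap_of_perm_onK.
Qed.
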